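(* Consider the following online convex optimization setting. Let $\bm{X}\subset\mathbb{R}^n$ be a convex closed set, and for $t=1,\dots,T$ let $f_t:\bm{X}\to\mathbb{R}$ be the time-varying objective and $g_t:\bm{X}\to\mathbb{R}^m$ the time-varying constraint function, revealed only after the decision $x_t$ is made. Assume: (A1) $f_t$ and (each component of) $g_t$ are convex, and $\bm{X}$ has bounded diameter $d(\bm{X})$, i.e. $\|x-y\|\le d(\bm{X})$ for all $x,y\in\bm{X}$; (A2) there is $F>0$ with $|f_t(x)-f_t(y)|\le F$ and $\|g_t(x)\|\le F$ for all $t$ and all $x,y\in\bm{X}$; (A3) subgradients $\partial f_t(x)$, $\partial g_t(x)$ exist and there is $G>0$ with $\|\partial f_t(x)\|\le G$ and $\|\partial g_t(x)\|\le G$ for all $t$ and $x\in\bm{X}$. Let $c\in(0,1)$, $\kappa\in[0,c]$, $\alpha_0>0$, $\beta_0>0$, $\gamma_0\in(0,1/\sqrt{2G})$ be constants, and set $M=\lfloor \kappa\log_2(1+T)\rfloor+1$, $\alpha_{i,t}=\alpha_0 2^{i-1}/t^{c}$, $\beta_{i,t}=\beta_0/\sqrt{\alpha_{i,t}}$, $\gamma=\gamma_0/T^{c}$ for $i\in\{1,\dots,M\}$. Run the following algorithm (VQB-OCO). Initialization: $Q_{i,0}=0$, arbitrary $x_{i,1}\in\bm{X}$, weights $\rho_{i,1}=(M+1)/[i(i+1)M]$ for $i=1,\dots,M$, and $x_1=\sum_{i=1}^M\rho_{i,1}x_{i,1}$. For $t=2,\dots,T$ and each $i\in\{1,\dots,M\}$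 (in parallel): $Q_{i,t-1}=Q_{i,t-2}+\beta_{i,t-1}[g_{t-1}(x_{t-1})]_+$; $x_{i,t}=\arg\min_{x\in\bm{X}}\{\alpha_{i,t-1}\langle\partial f_{t-1}(x_{t-1}),x\rangle+\alpha_{i,t-1}\beta_{i,t-1}\langle Q_{i,t-1},[g_{t-1}(x)]_+\rangle+\|x-x_{i,t-1}\|^2\}$; $\ell_{i,t-1}=\langle\partial f_{t-1}(x_{t-1}),x_{i,t-1}-x_{t-1}\rangle$, $\rho_{i,t}=\dfrac{\rho_{i,t-1}e^{-\gamma\ell_{i,t-1}}}{\sum_{j=1}^M\rho_{j,t-1}e^{-\gamma\ell_{j,t-1}}}$; and the decision is $x_t=\sum_{i=1}^M\rho_{i,t}x_{i,t}$. Then the dynamic regret satisfies $$\mathrm{Reg}=\sum_{t=1}^T\bigl[f_t(x_t)-f_t(y_t)\bigr]=\mathcal{O}\bigl(T^{c}(1+P_x)^{1-\kappa}+T^{1-c}(1+P_x)^{\kappa}\bigr),$$ where $\{y_t\}_{t=1}^T\subset\bm{X}$ is the global (in-hindsight) optimal decision sequence and $P_x=\sum_{t=1}^{T-1}\|y_{t+1}-y_t\|$ is its path length.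
   Context: $[\cdot]_+$ denotes the componentwise positive part $\max\{\cdot,0\}$; $\langle\cdot,\cdot\rangle$ is the standard inner product. $Q_{i,t}\in\mathbb{R}^m$ is a ''virtual queue'' used in place of unknown dual variables; the index $i$ labels $M$ parallel ''experts'' run with different step sizes, combined by exponential weights $\rho_{i,t}$. The big-$\mathcal{O}$ hides constants depending on $\alpha_0,\beta_0,\gamma_0,G,d(\bm{X}),c,\kappa$. The comparator $y_t$ is the global optimum of the offline (hindsight) problem, and $P_x$ (path length) is the accumulated variation of these optimal decisions. *)

From HB Require Import structures.
From mathcomp Require Import all_boot all_order all_algebra.
From mathcomp Require Import all_classical all_reals all_analysis.
Set Implicit Arguments. Unset Strict Implicit. Unset Printing Implicit Defensive.
Import Order.TTheory GRing.Theory Num.Theory.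
Local Open Scope ring_scope.

Section Defs.
Variable R : realType.

Definition dotv (n : nat) (u v : 'rV[R]_n) : R := \sum_(k < n) u 0 k * v 0 k.
Definition enorm (n : nat) (u : 'rV[R]_n) : R := Num.sqrt (dotv u u).
(* Frobenius norm of a matrix (used for the "Jacobian" subgradient of g_t) *)
Definition frob (m n : nat) (A : 'M[R]_(m, n)) : R :=
  Num.sqrt (\sum_(i < m) \sum_(j < n) A i j ^+ 2).
Definition pospart (m : nat) (u : 'rV[R]_m) : 'rV[R]_m := map_mx (fun a => Num.max a 0) u.

Definition convex_on (n : nat) (X : set 'rV[R]_n) : Prop :=
  forall x y (l : R), X x -> X y -> 0 <= l <= 1 -> X (l *: x + (1 - l) *: y).

Definition convex_fun_on (n : nat) (X : set 'rV[R]_n) (h : 'rV[R]_n -> R) : Prop :=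
  forall x y (l : R), X x -> X y -> 0 <= l <= 1 ->
    h (l *: x + (1 - l) *: y) <= l * h x + (1 - l) * h y.

Definition is_subgrad (n : nat) (X : set 'rV[R]_n) (h : 'rV[R]_n -> R) (x s : 'rV[R]_n) : Prop :=
  forall y, X y -> h x + dotv s (y - x) <= h y.

Definition log2 (a : R) : R := ln a / ln 2.

Definition nexperts (kappa : R) (T : nat) : nat :=
  (`|Num.floor (kappa * log2 (1 + T%:R))|)%N.+1.

(* step sizes; the expert index i : 'I_M stands for i+1 in {1,...,M} *)
Definition alpha (alpha0 c : R) (M : nat) (i : 'I_M) (t : nat) : R :=
  alpha0 * 2 ^+ i / (t%:R `^ c).
Definition beta (alpha0 beta0 c : R) (M : nat) (i : 'I_M) (t : nat) : R :=
  beta0 / Num.sqrt (alpha alpha0 c i t).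
Definition gammaT (gamma0 c : R) (T : nat) : R := gamma0 / (T%:R `^ c).

Definition VQB_run (n m : nat) (c kappa alpha0 beta0 gamma0 : R) (T : nat)
  (X : set 'rV[R]_n) (f : nat -> 'rV[R]_n -> R) (g : nat -> 'rV[R]_n -> 'rV[R]_m)
  (sf : nat -> 'rV[R]_n -> 'rV[R]_n)
  (xi : 'I_(nexperts kappa T) -> nat -> 'rV[R]_n)
  (Q : 'I_(nexperts kappa T) -> nat -> 'rV[R]_m)
  (rho : 'I_(nexperts kappa T) -> nat -> R)
  (x : nat -> 'rV[R]_n) : Prop :=
  let M := nexperts kappa T in
  let al := alpha alpha0 c (M:=M) in
  let be := beta alpha0 beta0 c (M:=M) in
  let ga := gammaT gamma0 c T in
  (forall i, Q i 0%N = 0) /\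
  (forall i, X (xi i 1%N)) /\
  (forall i : 'I_M, rho i 1%N = (M%:R + 1) / ((i.+1)%:R * (i.+2)%:R * M%:R)) /\
  (forall (t : nat) (i : 'I_M), (2 <= t <= T)%N ->
     Q i t.-1 = Q i t.-2 + be i t.-1 *: pospart (g t.-1 (x t.-1))) /\
  (forall (t : nat) (i : 'I_M), (2 <= t <= T)%N ->
     let obj := fun z : 'rV[R]_n =>
       al i t.-1 * dotv (sf t.-1 (x t.-1)) z
       + al i t.-1 * be i t.-1 * dotv (Q i t.-1) (pospart (g t.-1 z))
       + enorm (z - xi i t.-1) ^+ 2 in
     X (xi i t) /\ (forall z, X z -> obj (xi i t) <= obj z)) /\
  (forall (t : nat) (i : 'I_M), (2 <= t <= T)%N ->
     let ell := fun j : 'I_M => dotv (sf t.-1 (x t.-1)) (xi j t.-1 - x t.-1) in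
     rho i t = rho i t.-1 * expR (- (ga * ell i)) /
               (\sum_(j < M) rho j t.-1 * expR (- (ga * ell j)))) /\
  (forall t : nat, (1 <= t <= T)%N -> x t = \sum_(i < M) rho i t *: xi i t).

Definition feasible_seq (n m : nat) (T : nat) (X : set 'rV[R]_n)
  (g : nat -> 'rV[R]_n -> 'rV[R]_m) (y : nat -> 'rV[R]_n) : Prop :=
  forall t, (1 <= t <= T)%N -> X (y t) /\ (forall k, g t (y t) 0 k <= 0).

Definition offline_optimal (n m : nat) (T : nat) (X : set 'rV[R]_n)
  (f : nat -> 'rV[R]_n -> R) (g : nat -> 'rV[R]_n -> 'rV[R]_m) (y : nat -> 'rV[R]_n) : Prop :=
  feasible_seq T X g y /\
  forall z, feasible_seq T X g z ->
    \sum_(1 <= t < T.+1) f t (y t) <= \sum_(1 <= t < T.+1) f t (z t).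

Definition regret (n : nat) (T : nat) (f : nat -> 'rV[R]_n -> R) (x y : nat -> 'rV[R]_n) : R :=
  \sum_(1 <= t < T.+1) (f t (x t) - f t (y t)).

Definition path_length (n : nat) (T : nat) (y : nat -> 'rV[R]_n) : R :=
  \sum_(1 <= t < T) enorm (y t.+1 - y t).

End Defs.

From HB Require Import structures.
From mathcomp Require Import all_boot all_order all_algebra.
From mathcomp Require Import all_classical all_reals all_analysis.
From mathcomp Require Import ring lra zify.
Import Order.TTheory GRing.Theory Num.Theory.
Import numFieldNormedType.Exports.
Set Implicit Arguments. Unset Strict Implicit. Unset Printing Implicit Defensive.
Local Open Scope ring_scope.

(* The queue term vanishes at the feasible comparator and is nonnegative at the
   iterate, so against the linearized losses expert i has dynamic regret
   O(T^c (1 + P) / 2^i + 2^i T^(1-c)), where P is the path length.  The losses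
   fed to the exponential weights are centred at their weighted mean, so the
   weights lose O(T^(1-c)) plus ln(1 / rho_(i,1)) / gamma = O(i T^c) against
   expert i.  Since 2^M > (1 + T)^kappa, some expert has 2^i ~ (1 + P)^kappa,
   which balances the two terms. *)

Section Euclidean.
Variables (R : realType) (n : nat).
Implicit Types (u v w : 'rV[R]_n) (a : R).

Lemma dotvC u v : dotv u v = dotv v u.
Proof. by apply: eq_bigr => k _; rewrite mulrC. Qed.

Lemma dotvDr u v w : dotv u (v + w) = dotv u v + dotv u w.
Proof. by rewrite /dotv -big_split; apply: eq_bigr => k _; rewrite mxE mulrDr. Qed.

Lemma dotvZr a u v : dotv u (a *: v) = a * dotv u v.
Proof. by rewrite /dotv mulr_sumr; apply: eq_bigr => k _; rewrite mxE mulrCA. Qed.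

Lemma dotvNr u v : dotv u (- v) = - dotv u v.
Proof. by rewrite -scaleN1r dotvZr mulN1r. Qed.

Lemma dotvBr u v w : dotv u (v - w) = dotv u v - dotv u w.
Proof. by rewrite dotvDr dotvNr. Qed.

Lemma dotvDl u v w : dotv (v + w) u = dotv v u + dotv w u.
Proof. by rewrite dotvC dotvDr !(dotvC u). Qed.

Lemma dotvBl u v w : dotv (v - w) u = dotv v u - dotv w u.
Proof. by rewrite dotvC dotvBr !(dotvC u). Qed.

Lemma dotvZl a u v : dotv (a *: v) u = a * dotv v u.
Proof. by rewrite dotvC dotvZr dotvC. Qed.

Lemma dotvNl u v : dotv (- v) u = - dotv v u.
Proof. by rewrite dotvC dotvNr dotvC. Qed.

Lemma dotv0r u : dotv u 0 = 0.
Proof. by apply: big1 => k _; rewrite mxE mulr0. Qed.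

Lemma dotv_sumr (I : Type) (r : seq I) (P : pred I) (F : I -> 'rV[R]_n) u :
  dotv u (\sum_(i <- r | P i) F i) = \sum_(i <- r | P i) dotv u (F i).
Proof. exact: (big_morph _ (dotvDr u) (dotv0r u)). Qed.

Lemma dotv_ge0 u : 0 <= dotv u u.
Proof. by apply: sumr_ge0 => k _; rewrite -expr2 sqr_ge0. Qed.

Lemma enorm_ge0 u : 0 <= enorm u.
Proof. exact: sqrtr_ge0. Qed.

Lemma enorm_sqr u : enorm u ^+ 2 = dotv u u.
Proof. by rewrite sqr_sqrtr // dotv_ge0. Qed.

Lemma enorm_sqrD u v : enorm (u + v) ^+ 2 = enorm u ^+ 2 + 2 * dotv u v + enorm v ^+ 2.
Proof. by rewrite !enorm_sqr dotvDl !dotvDr [dotv v u]dotvC; ring. Qed.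

Lemma enormN u : enorm (- u) = enorm u.
Proof. by rewrite /enorm dotvNl dotvNr opprK. Qed.

Lemma enormBC u v : enorm (u - v) = enorm (v - u).
Proof. by rewrite -opprB enormN. Qed.

(* Lagrange's identity: the defect in Cauchy-Schwarz is a sum of squares. *)
Lemma dotv_sqr_le u v : dotv u v ^+ 2 <= dotv u u * dotv v v.
Proof.
have expand (a b : 'I_n -> R) : (\sum_k a k) * (\sum_l b l) = \sum_k \sum_l a k * b l.
  by rewrite mulr_suml; apply: eq_bigr => k _; rewrite mulr_sumr.
have lagrange : 2 * (dotv u u * dotv v v - dotv u v ^+ 2)
    = \sum_k \sum_l (u 0 k * v 0 l - u 0 l * v 0 k) ^+ 2.
  rewrite /dotv expr2 !expand mulrBr mulr2n mulrDl mul1r.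
  rewrite [X in _ + X - _]exchange_big -big_split mulr_sumr -sumrB.
  apply: eq_bigr => k _; rewrite mulr_sumr -big_split -sumrB.
  by apply: eq_bigr => l _ /=; ring.
rewrite -subr_ge0 -(pmulr_rge0 _ (ltr0n R 2)) lagrange.
by do 2!apply: sumr_ge0 => ? _; apply: sqr_ge0.
Qed.

Lemma normr_dotv_le u v : `|dotv u v| <= enorm u * enorm v.
Proof.
by rewrite -sqrtrM ?dotv_ge0 // -sqrtr_sqr ler_sqrt ?dotv_sqr_le // mulr_ge0 ?dotv_ge0.
Qed.

Lemma dotv_le u v : dotv u v <= enorm u * enorm v.
Proof. exact: le_trans (ler_norm _) (normr_dotv_le u v). Qed.

End Euclidean.

Section RealInequalities.
Variable R : realType.

Lemma expR_le_quadratic (y : R) : expR y <= 1 + y + y ^+ 2 * expR `|y|.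
Proof.
have ey := expR_gt0 y.
have tangent : expR y - 1 <= y * expR y.
  have := ler_wpM2r (ltW ey) (expR_ge1Dx (- y)).
  by rewrite -expRD addNr expR0; lra.
have [y0|y0] := leP 0 y.
  rewrite ger0_norm //.
  have : 0 <= y * (y * expR y - (expR y - 1)) by rewrite mulr_ge0 // subr_ge0.
  by lra.
rewrite ltr0_norm //.
have e1 : 1 <= expR (- y) by rewrite -expR0 ler_expR; lra.
have := expR_ge1Dx y.
have : y ^+ 2 <= y ^+ 2 * expR (- y) by rewrite ler_peMr ?sqr_ge0.
by nra.
Qed.

Lemma mean_expR_le (I : finType) (w y : I -> R) (b : R) :
  (forall j, 0 <= w j) -> \sum_j w j = 1 -> \sum_j w j * y j = 0 ->
  (forall j, `|y j| <= b) -> \sum_j w j * expR (y j) <= expR (b ^+ 2 * expR b).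
Proof.
move=> w0 w1 wy0 yb; apply: le_trans (expR_ge1Dx _).
have step j : w j * expR (y j) <= w j * (1 + y j + b ^+ 2 * expR b).
  rewrite ler_wpM2l // (le_trans (expR_le_quadratic _)) // lerD2l.
  have ysq : y j ^+ 2 <= b ^+ 2.
    by rewrite -real_normK ?num_real //; have := normr_ge0 (y j); have := yb j; nra.
  by apply: ler_pM; rewrite ?sqr_ge0 ?expR_ge0 ?ler_expR.
apply: le_trans (ler_sum _ (fun j _ => step j)) _.
under eq_bigr do rewrite !mulrDr mulr1.
by rewrite !big_split /= -mulr_suml w1 wy0 mul1r addr0.
Qed.

Lemma powR_weighted_AGM (a b c : R) : 0 <= a -> 0 <= b -> 0 < c < 1 ->
  a `^ (1 - c) * b `^ c <= (1 - c) * a + c * b.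
Proof.
move=> a0 b0 /andP[c0 c1]; have c'0 : 0 < 1 - c by rewrite subr_gt0.
have := @conjugate_powR R (a `^ (1 - c)) (b `^ c) (1 - c)^-1 c^-1.
rewrite !powR_ge0 !invr_gt0 c0 c'0 !invrK subrK => /(_ isT isT isT isT erefl).
by rewrite -!powRrM !mulfV ?gt_eqF // !powRr1 // [a * _]mulrC [b * _]mulrC.
Qed.

Lemma sum_powRN_le (c : R) (n : nat) : 0 < c < 1 ->
  \sum_(1 <= t < n.+1) (t%:R `^ c)^-1 <= n%:R `^ (1 - c) / (1 - c).
Proof.
move=> c01; have /andP[c0 c1] := c01; have c'0 : 0 < 1 - c by rewrite subr_gt0.
have step (t : nat) : (t.+1%:R `^ c)^-1 <= (t.+1%:R `^ (1 - c) - t%:R `^ (1 - c)) / (1 - c).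
  have Bp : 0 < t.+1%:R `^ c by rewrite powR_gt0.
  have AB : t%:R `^ (1 - c) <= (t%:R + c) / t.+1%:R `^ c.
    rewrite ler_pdivlMr // (le_trans (powR_weighted_AGM _ _ c01)) //.
    by rewrite -natr1; lra.
  have -> : t.+1%:R `^ (1 - c) = t.+1%:R / t.+1%:R `^ c :> R.
    by rewrite powRB ?powRr1 //; apply/implyP => _; rewrite pnatr_eq0.
  rewrite ler_pdivlMr // (le_trans _ (lerB (lexx _) AB)) // -mulrBl -natr1.
  by rewrite mulrC; apply: ler_wpM2r; [rewrite invr_ge0 ltW | lra].
rewrite -[1%N]/(0.+1) big_add1 /= (le_trans (ler_sum_nat (fun t _ => step t))) //.
by rewrite -mulr_suml telescope_sumr // powR0 ?subr0 // gt_eqF.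
Qed.

Lemma abel_sum_le (A r : nat -> R) (a : R) (n : nat) :
  (forall t, (1 <= t <= n.+1)%N -> 0 <= A t <= a) ->
  0 <= r 0%N -> nondecreasing_seq r ->
  \sum_(1 <= t < n.+1) (A t - A t.+1) * r t <= a * r n.
Proof.
move=> HA r0 r_nd; have rS t : r t <= r t.+1 by apply: r_nd.
have r_ge0 t : 0 <= r t by apply: le_trans r0 (r_nd _ _ (leq0n t)).
suff abel k : (k <= n)%N -> \sum_(1 <= t < k.+1) (A t - A t.+1) * r t <= (a - A k.+1) * r k.
  have /andP[A0 _] := HA n.+1 (leqnn _); apply: le_trans (abel n (leqnn n)) _.
  by rewrite ler_wpM2r // gerBl.
elim: k => [|k IH] lekn; first by rewrite big_geq // mulr_ge0 // subr_ge0; case/andP: (HA 1%N isT).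
rewrite big_nat_recr //= (le_trans (lerD (IH (ltnW lekn)) (lexx _))) //.
have /andP[_ Aa] := HA k.+1 (ltnW lekn); have /andP[A0 _] := HA k.+2 lekn.
have := ler_wpM2l (eqbRL (subr_ge0 _ _) Aa) (rS k); move: (r_ge0 k.+1); nra.
Qed.

Lemma powR_ge1 (a x : R) : 1 <= a -> 0 <= x -> 1 <= a `^ x.
Proof.
move=> a1 x0; have := @ge0_ler_powR R x x0 1 a; rewrite powR1.
by apply; rewrite ?nnegrE // (le_trans ler01).
Qed.

Lemma pow2_bracket (v K : R) (M : nat) : 1 <= v -> 1 <= K -> v <= K * 2 ^+ M.+1 ->
  exists2 i, (i <= M)%N & 2 ^+ i <= v <= 2 * K * 2 ^+ i.
Proof.
move=> v1 K1; elim: M => [|M IH] vK.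
  by exists 0%N; rewrite // expr0 v1 mulr1 mulrC; exact: vK.
have [le2v|] := leP (2 ^+ M.+1) v.
  by exists M.+1; rewrite // le2v (le_trans vK) // exprS mulrA [K * 2]mulrC.
move=> /ltW lev2; have [|i iM] := IH; last by exists i; rewrite // (leq_trans iM).
by apply: le_trans lev2 _; rewrite exprS ler_peMl // (le_trans K1) // ler_peMr.
Qed.

Lemma powR_lt_nexperts (kappa : R) (T : nat) : 0 <= kappa ->
  (1 + T%:R) `^ kappa < 2 ^+ nexperts kappa T.
Proof.
move=> k0; rewrite /nexperts /log2.
set z := kappa * (ln (1 + T%:R) / ln 2).
have l2 : 0 < ln (2 : R) by rewrite ln_gt0 // ltr1n.
have T1 : (1 : R) <= 1 + T%:R by rewrite lerDl.
have z0 : 0 <= z by apply: mulr_ge0 => //; apply: divr_ge0; [exact: ln_ge0 | exact: ltW].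
have zlt : z < `|Num.floor z|%N%:R + 1.
  by rewrite natr_absz ger0_norm ?floor_ge0 // -intrD1 floorD1_gt.
rewrite -[2 ^+ _]lnK ?posrE ?exprn_gt0 // lnXn // /powR gt_eqF; last first.
  exact: lt_le_trans ltr01 T1.
rewrite ltr_expR -[X in _ < X]mulr_natl -natr1.
have -> : kappa * ln (1 + T%:R) = z * ln 2 by rewrite /z mulrA divfK ?gt_eqF.
by rewrite ltr_pM2r.
Qed.

Lemma exp2_ge_mul_succ (i : nat) : (i.+1 * i.+2 <= 2 ^ (2 * i.+1))%N.
Proof.
rewrite mul2n -addnn expnD.
by apply: leq_mul; [exact: ltnW (ltn_expl _ (ltnSn 1)) | exact: ltn_expl].
Qed.

End RealInequalities.

Section Convexity.
Variables (R : realType) (n : nat) (X : set 'rV[R]_n).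
Implicit Types (h : 'rV[R]_n -> R).

Lemma convex_on_sum (I : eqType) (r : seq I) (w : I -> R) (p : I -> 'rV[R]_n) :
  convex_on X -> (forall i, 0 <= w i) -> (forall i, X (p i)) ->
  0 < \sum_(i <- r) w i -> X ((\sum_(i <- r) w i)^-1 *: \sum_(i <- r) w i *: p i).
Proof.
move=> cX w0 Xp; elim: r => [|a r IH]; first by rewrite big_nil ltxx.
rewrite !big_cons; set S := \sum_(i <- r) w i => Spos.
have S0 : 0 <= S by rewrite sumr_ge0.
have [S_eq0|S_neq0] := eqVneq S 0.
  have wr0 i : i \in r -> w i = 0.
    by move: S_eq0 => /eqP; rewrite psumr_eq0 // => /allP/(_ i) wr /wr /eqP.
  have -> : \sum_(i <- r) w i *: p i = 0.
    by rewrite big_seq big1 // => i /wr0 ->; rewrite scale0r.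
  rewrite S_eq0 addr0 in Spos *.
  by rewrite addr0 scalerA mulVf ?scale1r // gt_eqF.
have Spos' : 0 < S by rewrite lt_def S_neq0.
have wa0 := w0 a.
have l01 : 0 <= w a / (w a + S) <= 1.
  by apply/andP; split; [rewrite divr_ge0 // ltW | rewrite ler_pdivrMr // mul1r lerDl].
have := cX _ _ _ (Xp a) (IH Spos') l01; congr X.
rewrite scalerDr !scalerA -/S mulrC; congr (_ *: _ + _ *: _).
by field; apply/andP; split; rewrite gt_eqF.
Qed.

Lemma convex_fun_on_dotv (s : 'rV[R]_n) : convex_fun_on X (dotv s).
Proof. by move=> x y l _ _ _; rewrite dotvDr !dotvZr. Qed.

Lemma convex_fun_onD h1 h2 :
  convex_fun_on X h1 -> convex_fun_on X h2 -> convex_fun_on X (fun u => h1 u + h2 u).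
Proof.
move=> c1 c2 x y l Xx Xy l01.
by rewrite !mulrDr addrACA lerD ?c1 ?c2.
Qed.

Lemma convex_fun_onZ (a : R) h :
  0 <= a -> convex_fun_on X h -> convex_fun_on X (fun u => a * h u).
Proof.
move=> a0 ch x y l Xx Xy l01.
by rewrite mulrCA [(1 - l) * _]mulrCA -mulrDr ler_wpM2l // ch.
Qed.

Lemma convex_fun_on_sum (I : finType) (h : I -> 'rV[R]_n -> R) :
  (forall k, convex_fun_on X (h k)) -> convex_fun_on X (fun u => \sum_k h k u).
Proof.
move=> ch x y l Xx Xy l01.
by rewrite !mulr_sumr -big_split; apply: ler_sum => k _; apply: ch.
Qed.

Lemma convex_fun_on_max0 h : convex_fun_on X h -> convex_fun_on X (fun u => Num.max (h u) 0).
Proof.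
move=> ch x y l Xx Xy /[dup] l01 /andP[l0 l1].
have m0 z : 0 <= Num.max (h z) 0 by rewrite le_max lexx orbT.
rewrite ge_max; apply/andP; split; last by rewrite addr_ge0 // mulr_ge0 // subr_ge0.
apply: le_trans (ch _ _ _ Xx Xy l01) _.
by apply: lerD; apply: ler_wpM2l; rewrite ?subr_ge0 ?le_max ?lexx.
Qed.

Lemma convex_fun_on_dotv_pospart m (q : 'rV[R]_m) (g : 'rV[R]_n -> 'rV[R]_m) :
  (forall k, 0 <= q 0 k) -> (forall k, convex_fun_on X (fun u => g u 0 k)) ->
  convex_fun_on X (fun u => dotv q (pospart (g u))).
Proof.
move=> q0 cg; rewrite /dotv /pospart.
under eq_fun do under eq_bigr do rewrite mxE.
by apply: convex_fun_on_sum => k; apply/convex_fun_onZ/convex_fun_on_max0.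
Qed.

Lemma ge0_of_perturb (A N : R) : 0 <= N ->
  (forall l, 0 < l <= 1 -> 0 <= A + l * N) -> 0 <= A.
Proof.
move=> N0 pert; rewrite leNgt; apply/negP => A0.
have lpos : 0 < - A / (N + 1 - A) by rewrite divr_gt0 //; lra.
have l1 : - A / (N + 1 - A) <= 1 by rewrite ler_pdivrMr; lra.
have := pert _ (introT andP (conj lpos l1)).
have -> : A + - A / (N + 1 - A) * N = - A / (N + 1 - A) * (A - 1) by field; lra.
by rewrite pmulr_rge0 //; lra.
Qed.

(* First-order optimality of u along the segment from u to z. *)
Lemma prox_three_point (L : 'rV[R]_n -> R) (p u z : 'rV[R]_n) :
  convex_on X -> convex_fun_on X L -> X u -> X z ->
  (forall w, X w -> L u + enorm (u - p) ^+ 2 <= L w + enorm (w - p) ^+ 2) ->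
  L u + enorm (u - p) ^+ 2 + enorm (z - u) ^+ 2 <= L z + enorm (z - p) ^+ 2.
Proof.
move=> cX cL Xu Xz umin.
have segment l : l *: z + (1 - l) *: u - p = (u - p) + l *: (z - u).
  by apply/rowP => k; rewrite !mxE; ring.
set N := enorm (z - u) ^+ 2; set d := dotv (u - p) (z - u).
have zp : z - p = (u - p) + (z - u) by apply/rowP => k; rewrite !mxE; ring.
suff : 0 <= L z - L u + 2 * d by rewrite zp (enorm_sqrD (u - p)) -/d -/N; lra.
apply: (ge0_of_perturb (sqr_ge0 (enorm (z - u)))) => l /andP[l0 l1].
have l01 : 0 <= l <= 1 by rewrite ltW.
have := umin _ (cX _ _ _ Xz Xu l01); rewrite segment (enorm_sqrD (u - p)) dotvZr.
rewrite (enorm_sqr (l *: _)) dotvZl dotvZr -enorm_sqr -/N -/d => min_l.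
have conv_l := cL _ _ _ Xz Xu l01.
by rewrite -(pmulr_rge0 _ l0); nra.
Qed.

End Convexity.

Section Hedge.
Variables (R : realType) (M T : nat) (rho : 'I_M -> nat -> R) (ell : nat -> 'I_M -> R).
Variables (ga B : R).
Hypothesis ga_gt0 : 0 < ga.
Hypothesis rho_simplex :
  forall t, (1 <= t <= T)%N -> (forall j, 0 < rho j t) /\ \sum_j rho j t = 1.
Hypothesis ell_bound : forall t j, (1 <= t < T)%N -> `|ell t j| <= B.
Hypothesis ell_mean0 : forall t, (1 <= t < T)%N -> \sum_j rho j t * ell t j = 0.
Hypothesis rho_update : forall t j, (1 <= t < T)%N ->
  rho j t.+1 = rho j t * expR (- (ga * ell t j)) / \sum_k rho k t * expR (- (ga * ell t k)).

Local Notation K := ((ga * B) ^+ 2 * expR (ga * B)).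

Lemma hedge_normalizer_le t : (1 <= t < T)%N ->
  \sum_k rho k t * expR (- (ga * ell t k)) <= expR K.
Proof.
move=> tT; have [rho_pos rho_sum] : (forall j, 0 < rho j t) /\ \sum_j rho j t = 1.
  by apply: rho_simplex; lia.
apply: mean_expR_le => [j|//||j]; first exact: ltW.
- rewrite (eq_bigr (fun j => - ga * (rho j t * ell t j))) => [|j _]; last by ring.
  by rewrite -mulr_sumr ell_mean0 ?mulr0.
- by rewrite normrN normrM gtr0_norm // ler_pM2l // ell_bound.
Qed.

Lemma hedge_weight_ge i t : (1 <= t <= T)%N ->
  rho i 1 * expR (- (ga * \sum_(1 <= s < t) ell s i)) <= rho i t * expR (t.-1%:R * K).
Proof.
elim: t => [//|[|t] IH] /andP[_ tT].
  by rewrite big_geq // mulr0 oppr0 expR0 mul0r expR0.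
have tT' : (1 <= t.+1 < T)%N by [].
have [rho_pos _] : (forall j, 0 < rho j t.+1) /\ \sum_j rho j t.+1 = 1.
  by apply: rho_simplex; lia.
set Z := \sum_k rho k t.+1 * expR (- (ga * ell t.+1 k)).
have Z_pos : 0 < Z.
  rewrite /Z (bigD1 i) //= ltr_pwDl ?mulr_gt0 ?expR_gt0 //.
  by apply: sumr_ge0 => k _; rewrite mulr_ge0 ?expR_ge0 // ltW.
have step : rho i t.+1 * expR (- (ga * ell t.+1 i)) <= rho i t.+2 * expR K.
  rewrite (rho_update (t := t.+1)) // -/Z mulrAC ler_pdivlMr //.
  by rewrite ler_pM2l ?mulr_gt0 ?expR_gt0 // hedge_normalizer_le.
rewrite big_nat_recr //= mulrDr opprD expRD mulrA.
apply: le_trans (ler_wpM2r (expR_ge0 _) (IH (ltnW tT))) _.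
rewrite mulrAC (le_trans (ler_wpM2r (expR_ge0 _) step)) //.
by rewrite -mulrA -expRD -[X in _ <= _ * expR (X%:R * _)]addn1 natrD mulrDl mul1r addrC.
Qed.

Lemma hedge_loss_ge i : (1 <= T)%N ->
  - (ga * \sum_(1 <= t < T) ell t i) <= T.-1%:R * K - ln (rho i 1).
Proof.
move=> T1; have TT : (1 <= T <= T)%N by rewrite T1 leqnn.
have [rho_pos rho_sum] := rho_simplex TT.
have [rho1_pos _] := rho_simplex (T1 : (1 <= 1 <= T)%N).
have rhoT_le1 : rho i T <= 1.
  by rewrite -rho_sum (bigD1 i) //= lerDl sumr_ge0 // => k _; apply: ltW.
rewrite lerBrDr -ler_expR expRD lnK ?posrE // mulrC.
apply: le_trans (hedge_weight_ge i TT) _.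
by rewrite ler_piMl ?expR_ge0.
Qed.

End Hedge.

Section ProximalRegret.
Variables (R : realType) (n : nat).
Implicit Types (s x w y p q : 'rV[R]_n).

Lemma prox_step_le s x w y (r G : R) : 0 < r -> enorm s <= G ->
  dotv s (w - y) <= r * (enorm (y - x) ^+ 2 - enorm (y - w) ^+ 2 - enorm (w - x) ^+ 2) ->
  dotv s (x - y) <= r * (enorm (y - x) ^+ 2 - enorm (y - w) ^+ 2) + G ^+ 2 / (4 * r).
Proof.
move=> r0 sG step; set e := enorm (w - x) in step *.
have -> : dotv s (x - y) = dotv s (x - w) + dotv s (w - y) by rewrite -dotvDr addrA subrK.
have move_le : dotv s (x - w) <= G * e.
  apply: le_trans (dotv_le _ _) _; rewrite enormBC -/e.
  by apply: ler_wpM2r; rewrite ?enorm_ge0.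
have amgm : G * e <= G ^+ 2 / (4 * r) + r * e ^+ 2.
  have : 0 <= r * (e - G / (2 * r)) ^+ 2 by rewrite mulr_ge0 ?sqr_ge0 ?ltW.
  have -> : r * (e - G / (2 * r)) ^+ 2 = r * e ^+ 2 - G * e + G ^+ 2 / (4 * r).
    by field; rewrite gt_eqF.
  lra.
lra.
Qed.

Lemma sqr_enorm_drift_le p q (D : R) : enorm p <= D -> enorm q <= D ->
  enorm p ^+ 2 - enorm q ^+ 2 <= 2 * D * enorm (p - q).
Proof.
move=> pD qD.
have -> : enorm p ^+ 2 - enorm q ^+ 2 = dotv (p - q) p + dotv (p - q) q.
  by rewrite !enorm_sqr !dotvBl [dotv q p]dotvC; ring.
have := ler_wpM2l (enorm_ge0 (p - q)) pD; have := ler_wpM2l (enorm_ge0 (p - q)) qD.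
by have := dotv_le (p - q) p; have := dotv_le (p - q) q; lra.
Qed.

(* Abel summation of the proximal inequalities; moving the comparator from
   y_t to y_(t+1) costs 2 D r_T per unit of path length. *)
Lemma prox_dynamic_regret_le (X : set 'rV[R]_n) (D G : R) (T : nat)
    (s xe y : nat -> 'rV[R]_n) (r : nat -> R) :
  (1 <= T)%N -> (forall u v, X u -> X v -> enorm (u - v) <= D) ->
  (forall t, (1 <= t <= T)%N -> [/\ X (xe t), X (y t) & enorm (s t) <= G]) ->
  0 <= r 0%N -> 0 < r 1%N -> nondecreasing_seq r ->
  (forall t, (1 <= t < T)%N -> dotv (s t) (xe t.+1 - y t) <=
     r t * (enorm (y t - xe t) ^+ 2 - enorm (y t - xe t.+1) ^+ 2 - enorm (xe t.+1 - xe t) ^+ 2)) ->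
  \sum_(1 <= t < T.+1) dotv (s t) (xe t - y t) <=
    D ^+ 2 * r T + 2 * D * r T * path_length T y
    + G ^+ 2 / 4 * \sum_(1 <= t < T) (r t)^-1 + G * D.
Proof.
move=> T1 diam inX r0 r1 r_nd step.
have r_pos t : (1 <= t)%N -> 0 < r t by move=> t1; apply: lt_le_trans r1 (r_nd _ _ t1).
set A := fun t => enorm (y t - xe t) ^+ 2.
have last_le : dotv (s T) (xe T - y T) <= G * D.
  have [XxT XyT sG] := inX T (introT andP (conj T1 (leqnn T))).
  by apply: le_trans (dotv_le _ _) _; apply: ler_pM; rewrite ?enorm_ge0 ?diam.
have per_step t : (1 <= t < T)%N -> dotv (s t) (xe t - y t) <=
    (A t - A t.+1) * r t + 2 * D * r T * enorm (y t.+1 - y t) + G ^+ 2 / 4 * (r t)^-1.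
  move=> tT; have [Xx Xy sG] : [/\ X (xe t), X (y t) & enorm (s t) <= G] by apply: inX; lia.
  have [Xx' Xy' _] : [/\ X (xe t.+1), X (y t.+1) & enorm (s t.+1) <= G] by apply: inX; lia.
  have rt : 0 < r t by apply: r_pos; lia.
  have rtT : r t <= r T by apply: r_nd; lia.
  have drift := sqr_enorm_drift_le (diam _ _ Xy' Xx') (diam _ _ Xy Xx').
  rewrite opprB addrA subrK in drift.
  have D0 : 0 <= D by apply: le_trans (diam _ _ Xy Xx); apply: enorm_ge0.
  have drift_r := ler_wpM2l (ltW rt) drift.
  have drift_T : r t * (2 * D * enorm (y t.+1 - y t)) <= r T * (2 * D * enorm (y t.+1 - y t)).
    by apply: ler_wpM2r; rewrite // !mulr_ge0 ?enorm_ge0.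
  have := prox_step_le rt sG (step t tT).
  rewrite invfM mulrA /A; lra.
rewrite big_nat_recr //=.
apply: le_trans (lerD (ler_sum_nat per_step) last_le) _.
rewrite lerD2r !big_split /= -!mulr_sumr lerD2r /path_length lerD2r.
have := @abel_sum_le R A r (D ^+ 2) T.-1; rewrite prednK // => /(_ _ r0 r_nd) abel.
apply: le_trans (abel _) _; last by rewrite ler_wpM2l ?sqr_ge0 // r_nd // leq_pred.
move=> t tT; have [Xx Xy _] := inX t tT; have yxD := diam _ _ Xy Xx.
by rewrite /A sqr_ge0 ler_sqr ?nnegrE ?enorm_ge0 // (le_trans (enorm_ge0 _) yxD).
Qed.

End ProximalRegret.

Section Rate.
Variable R : realType.

Definition expert_bound (c alpha0 gamma0 G D T P : R) (i : nat) : R :=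
  T `^ c / (alpha0 * 2 ^+ i) * (D ^+ 2 + 2 * D * P)
  + G ^+ 2 * alpha0 * 2 ^+ i / (4 * (1 - c)) * T `^ (1 - c)
  + gamma0 * (G * D) ^+ 2 * expR (gamma0 * (G * D)) * T `^ (1 - c)
  + 2 * i.+1%:R * ln 2 * T `^ c / gamma0
  + 2 * (G * D).

Definition rate_const (c kappa alpha0 gamma0 G D : R) : R :=
  2 * (1 + D) * (D ^+ 2 + 2 * D) / alpha0
  + G ^+ 2 * alpha0 / (4 * (1 - c))
  + gamma0 * (G * D) ^+ 2 * expR (gamma0 * (G * D))
  + 2 * (ln 2 + kappa / (1 - kappa)) / gamma0
  + 2 * (G * D).

Lemma rate_terms_ge0 (c kappa alpha0 gamma0 G D : R) :
  c < 1 -> 0 <= kappa < 1 -> 0 < alpha0 -> 0 < gamma0 -> 0 <= G -> 0 <= D ->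
  [/\ 0 <= 2 * (1 + D) * (D ^+ 2 + 2 * D) / alpha0,
      0 <= G ^+ 2 * alpha0 / (4 * (1 - c)),
      0 <= gamma0 * (G * D) ^+ 2 * expR (gamma0 * (G * D)),
      0 < 2 * (ln 2 + kappa / (1 - kappa)) / gamma0
    & 0 <= 2 * (G * D)].
Proof.
move=> c1 /andP[k0 k1] a0 g0 G0 D0; have GD : 0 <= G * D by rewrite mulr_ge0.
split.
- by apply: divr_ge0 (ltW a0); apply: mulr_ge0; [lra | rewrite addr_ge0 ?sqr_ge0 //; lra].
- by apply: divr_ge0; [rewrite mulr_ge0 ?sqr_ge0 // ltW | lra].
- by rewrite mulr_ge0 ?expR_ge0 // mulr_ge0 ?sqr_ge0 // ltW.
- have l2 : 0 < ln (2 : R) by rewrite ln_gt0 // ltr1n.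
  by rewrite divr_gt0 // mulr_gt0 // ltr_pwDl // divr_ge0 // subr_ge0 ltW.
- by rewrite mulr_ge0.
Qed.

Lemma rate_const_gt0 (c kappa alpha0 gamma0 G D : R) :
  c < 1 -> 0 <= kappa < 1 -> 0 < alpha0 -> 0 < gamma0 -> 0 <= G -> 0 <= D ->
  0 < rate_const c kappa alpha0 gamma0 G D.
Proof.
move=> c1 k01 a0 g0 G0 D0; have [C1 C2 C3 C4 C5] := rate_terms_ge0 c1 k01 a0 g0 G0 D0.
by rewrite /rate_const; lra.
Qed.

Lemma drift_term_le (kappa alpha0 D P : R) (i : nat) :
  0 <= kappa < 1 -> 0 < alpha0 -> 0 <= D -> 0 <= P ->
  (1 + P) `^ kappa <= 2 * (1 + D) * 2 ^+ i ->
  (D ^+ 2 + 2 * D * P) / (alpha0 * 2 ^+ i)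
    <= 2 * (1 + D) * (D ^+ 2 + 2 * D) / alpha0 * (1 + P) `^ (1 - kappa).
Proof.
move=> /andP[k0 k1] a0 D0 P0 hi.
have split1P : 1 + P = (1 + P) `^ kappa * (1 + P) `^ (1 - kappa).
  rewrite -powRD; last by apply/implyP => _; rewrite gt_eqF // ltr_pwDl.
  by rewrite subrKC powRr1 // addr_ge0.
move: split1P hi; set v := _ `^ kappa; set w := _ `^ (1 - kappa) => split1P hi.
have DD : 0 <= D ^+ 2 + 2 * D by rewrite addr_ge0 ?sqr_ge0 ?mulr_ge0.
rewrite ler_pdivrMr ?mulr_gt0 ?exprn_gt0 //.
have -> : 2 * (1 + D) * (D ^+ 2 + 2 * D) / alpha0 * w * (alpha0 * 2 ^+ i)
    = (D ^+ 2 + 2 * D) * (w * (2 * (1 + D) * 2 ^+ i)) by field; rewrite gt_eqF.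
apply: le_trans (_ : _ <= (D ^+ 2 + 2 * D) * (1 + P)) _.
  have : 0 <= D ^+ 2 * P by rewrite mulr_ge0 ?sqr_ge0.
  by nra.
by rewrite split1P ler_wpM2l // mulrC ler_wpM2l ?powR_ge0.
Qed.

Lemma log_weight_term_le (kappa P : R) (i : nat) :
  0 <= kappa < 1 -> 0 <= P -> 2 ^+ i <= (1 + P) `^ kappa ->
  i.+1%:R * ln 2 <= (ln 2 + kappa / (1 - kappa)) * (1 + P) `^ (1 - kappa).
Proof.
move=> /andP[k0 k1] P0 lo; have k'0 : 0 < 1 - kappa by rewrite subr_gt0.
set w := (1 + P) `^ (1 - kappa).
have w1 : 1 <= w by rewrite powR_ge1 ?lerDl // ltW.
have l2 : 0 <= ln (2 : R) by rewrite ln_ge0 // ler1n.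
have ilog : i%:R * ln 2 <= kappa / (1 - kappa) * ln w.
  rewrite /w ln_powR mulrA divfK ?gt_eqF // -!ln_powR powR_mulrn ?ler0n //.
  by rewrite ler_ln ?posrE ?exprn_gt0 // (lt_le_trans _ lo) ?exprn_gt0.
have lnw : ln w <= w.
  by have := @le_ln1Dx R (w - 1); rewrite subrKC => /(_ ltac:(lra)); lra.
have := ler_wpM2l (divr_ge0 k0 (ltW k'0)) lnw.
rewrite -natr1 mulrDl mul1r mulrDl; have := ler_wpM2l l2 w1; lra.
Qed.

Lemma expert_bound_le_rate (c kappa alpha0 gamma0 G D T P : R) (i : nat) :
  0 < c < 1 -> 0 <= kappa < 1 -> 0 < alpha0 -> 0 < gamma0 -> 0 <= G -> 0 <= D ->
  1 <= T -> 0 <= P -> 2 ^+ i <= (1 + P) `^ kappa <= 2 * (1 + D) * 2 ^+ i ->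
  expert_bound c alpha0 gamma0 G D T P i <= rate_const c kappa alpha0 gamma0 G D
    * (T `^ c * (1 + P) `^ (1 - kappa) + T `^ (1 - c) * (1 + P) `^ kappa).
Proof.
move=> /andP[c0 c1] k01 a0 g0 G0 D0 T1 P0 /andP[lo hi]; have /andP[k0 k1] := k01.
have c'0 : 0 < 1 - c by rewrite subr_gt0.
have drift := drift_term_le k01 a0 D0 P0 hi.
have logw := log_weight_term_le k01 P0 lo.
move: drift logw lo; set U := T `^ c; set V := T `^ (1 - c).
set v := (1 + P) `^ kappa; set w := (1 + P) `^ (1 - kappa) => drift logw lo.
have U1 : 1 <= U by rewrite powR_ge1 // ltW.
have V1 : 1 <= V by rewrite powR_ge1 // subr_ge0 ltW.
have v1 : 1 <= v by rewrite powR_ge1 ?lerDl.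
have w1 : 1 <= w by rewrite powR_ge1 ?lerDl // subr_ge0; apply: ltW.
have Uw1 : 1 <= U * w by rewrite mulr_ege1.
have Vv1 : 1 <= V * v by rewrite mulr_ege1.
have toU a b : 0 <= a -> b <= a * (U * w) -> b <= a * (U * w + V * v).
  by move=> a0' /le_trans; apply; rewrite ler_wpM2l // lerDl (le_trans ler01).
have toV a b : 0 <= a -> b <= a * (V * v) -> b <= a * (U * w + V * v).
  by move=> a0' /le_trans; apply; rewrite ler_wpM2l // lerDr (le_trans ler01).
have [C1 C2 C3 C4 C5] := rate_terms_ge0 c1 k01 a0 g0 G0 D0.
rewrite /expert_bound /rate_const -/U -/V !(mulrDl _ _ (U * w + V * v)).
repeat apply: lerD.
- by apply: toU => //; have := ler_wpM2l (le_trans ler01 U1) drift; lra.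
- by apply: toV => //; have := ler_wpM2l (mulr_ge0 C2 (le_trans ler01 V1)) lo; lra.
- by apply: toV => //; have := ler_wpM2l (mulr_ge0 C3 (le_trans ler01 V1)) v1; lra.
- apply: toU; first exact: ltW.
  have U0 : 0 <= 2 * U / gamma0 by apply: divr_ge0 (ltW g0); lra.
  by have := ler_wpM2l U0 logw; lra.
- by apply: toU; rewrite // ler_peMr.
Qed.

End Rate.

Section InitialWeights.
Variable R : realType.

Lemma sum_init_weights (M : nat) : (0 < M)%N ->
  \sum_(i < M) (M%:R + 1) / (i.+1%:R * i.+2%:R * M%:R) = 1 :> R.
Proof.
move=> M0; have Mpos : (0 : R) < M%:R by rewrite ltr0n.
have telescope k : \sum_(i < k) (i.+1%:R * i.+2%:R)^-1 = k%:R / k.+1%:R :> R.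
  elim: k => [|k IH]; first by rewrite big_ord0 mul0r.
  have k0 : (0 : R) <= k%:R by [].
  by rewrite big_ord_recr /= IH -!natr1; field; apply/andP; split; apply/eqP; lra.
under eq_bigr do rewrite invfM mulrCA mulrC.
by rewrite -mulr_sumr telescope -natr1; field; apply/andP; split; apply/eqP; lra.
Qed.

Lemma ln_init_weight_ge (M i : nat) : (0 < M)%N ->
  - ln ((M%:R + 1) / (i.+1%:R * i.+2%:R * M%:R)) <= (2 * i.+1)%:R * ln 2 :> R.
Proof.
move=> M0; set w := (M%:R + 1) / _.
have Mpos : (0 : R) < M%:R by rewrite ltr0n.
have w_pos : 0 < w by rewrite divr_gt0 ?mulr_gt0 ?ltr0n // addr_gt0.
have w_ge : (i.+1%:R * i.+2%:R)^-1 <= w.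
  rewrite /w (invfM (_ * _) M%:R) mulrCA ler_peMr ?invr_ge0 ?mulr_ge0 ?ler0n //.
  by rewrite ler_pdivlMr // mul1r lerDl.
have pow_ge : (i.+1%:R * i.+2%:R : R) <= 2 ^+ (2 * i.+1).
  by rewrite -natrM -natrX ler_nat exp2_ge_mul_succ.
rewrite lerNl mulr_natl -lnXn // -lnV ?posrE ?exprn_gt0 //.
rewrite ler_ln ?posrE ?invr_gt0 ?exprn_gt0 // (le_trans _ w_ge) //.
by rewrite lef_pV2 ?posrE ?mulr_gt0 ?ltr0n ?exprn_gt0.
Qed.

End InitialWeights.

Lemma path_length_le (R : realType) (n : nat) (X : set 'rV[R]_n) (D : R) (T : nat)
    (y : nat -> 'rV[R]_n) :
  0 <= D -> (forall u v, X u -> X v -> enorm (u - v) <= D) ->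
  (forall t, (1 <= t <= T)%N -> X (y t)) -> path_length T y <= T%:R * D.
Proof.
move=> D0 diam Xy; apply: le_trans (ler_sum_nat (G := fun=> D) _) _.
  by move=> t tT; apply: diam; apply: Xy; lia.
by rewrite sumr_const_nat -[D *+ _]mulr_natl ler_wpM2r // ler_nat; lia.
Qed.

Lemma path_scale_le (R : realType) (n : nat) (X : set 'rV[R]_n) (D kappa : R) (T : nat)
    (y : nat -> 'rV[R]_n) :
  0 <= kappa <= 1 -> 0 <= D -> (forall u v, X u -> X v -> enorm (u - v) <= D) ->
  (forall t, (1 <= t <= T)%N -> X (y t)) ->
  (1 + path_length T y) `^ kappa <= (1 + D) * 2 ^+ nexperts kappa T.
Proof.
move=> /andP[k0 k1] D0 diam Xy.
have P0 : 0 <= path_length T y by apply: sumr_ge0 => t _; apply: enorm_ge0.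
have PT := path_length_le D0 diam Xy.
have T0 : (0 : R) <= T%:R by [].
apply: le_trans (_ : ((1 + T%:R) * (1 + D)) `^ kappa <= _).
  by apply: ge0_ler_powR; rewrite ?nnegrE; nra.
rewrite powRM ?addr_ge0 // mulrC.
apply: ler_pM; rewrite ?powR_ge0 //; first by rewrite ler1_powR // lerDl.
exact: ltW (powR_lt_nexperts T k0).
Qed.

Section VQBRun.
Variables (R : realType) (n m : nat) (c kappa alpha0 beta0 gamma0 G D : R) (T : nat).
Variables (X : set 'rV[R]_n) (f : nat -> 'rV[R]_n -> R) (g : nat -> 'rV[R]_n -> 'rV[R]_m).
Variable sf : nat -> 'rV[R]_n -> 'rV[R]_n.
Local Notation M := (nexperts kappa T).
Variables (xi : 'I_M -> nat -> 'rV[R]_n) (Q : 'I_M -> nat -> 'rV[R]_m) (rho : 'I_M -> nat -> R).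
Variables (x y : nat -> 'rV[R]_n).

Hypotheses (c_gt0 : 0 < c) (c_lt1 : c < 1) (alpha0_gt0 : 0 < alpha0).
Hypotheses (beta0_ge0 : 0 <= beta0) (gamma0_gt0 : 0 < gamma0) (G_ge0 : 0 <= G) (D_ge0 : 0 <= D).
Hypothesis T_ge1 : (1 <= T)%N.
Hypothesis X_convex : convex_on X.
Hypothesis X_diam : forall u v, X u -> X v -> enorm (u - v) <= D.
Hypothesis g_convex : forall t k, (1 <= t <= T)%N -> convex_fun_on X (fun u => g t u 0 k).
Hypothesis sf_subgrad : forall t u, (1 <= t <= T)%N -> X u ->
  is_subgrad X (f t) u (sf t u) /\ enorm (sf t u) <= G.
Hypothesis run : VQB_run c alpha0 beta0 gamma0 X f g sf xi Q rho x.
Hypothesis y_feasible : feasible_seq T X g y.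

Local Notation ga := (gammaT gamma0 c T).
Local Notation ell t j := (dotv (sf t (x t)) (xi j t - x t)).

Lemma xi_in_X t i : (1 <= t <= T)%N -> X (xi i t).
Proof.
case: run => _ [xi1_X [_ [_ [xi_min _]]]] tT.
have [->|t_neq1] := eqVneq t 1%N; first exact: xi1_X.
by have [] := xi_min t i; first by move: t_neq1 tT; lia.
Qed.

Lemma rho_update t j : (1 <= t < T)%N ->
  rho j t.+1 = rho j t * expR (- (ga * ell t j)) / \sum_k rho k t * expR (- (ga * ell t k)).
Proof. by case: run => _ [_ [_ [_ [_ [rho_rec _]]]]]; apply: rho_rec. Qed.

Lemma rho_simplex t : (1 <= t <= T)%N -> (forall j, 0 < rho j t) /\ \sum_j rho j t = 1.
Proof.
have M0 : (0 < M)%N by [].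
case: run => _ [_ [rho1 _]]; elim: t => [//|[|t] IH] tT.
  split => [j|]; last by under eq_bigr do rewrite rho1; apply: sum_init_weights.
  by rewrite rho1 divr_gt0 ?mulr_gt0 ?ltr0n ?addr_gt0.
have tT' : (1 <= t.+1 < T)%N by [].
have [rho_pos rho_sum] := IH (ltnW tT).
set Z := \sum_k rho k t.+1 * expR (- (ga * ell t.+1 k)).
have Z_pos : 0 < Z.
  rewrite /Z (bigD1 (Ordinal M0)) //= ltr_pwDl ?mulr_gt0 ?expR_gt0 //.
  by apply: sumr_ge0 => k _; rewrite mulr_ge0 ?expR_ge0 // ltW.
split => [j|]; first by rewrite rho_update // divr_gt0 ?mulr_gt0 ?expR_gt0.
by under eq_bigr do rewrite rho_update //; rewrite -mulr_suml mulfV ?gt_eqF.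
Qed.

Lemma x_in_X t : (1 <= t <= T)%N -> X (x t).
Proof.
case: run => _ [_ [_ [_ [_ [_ x_def]]]]] tT; rewrite x_def //.
have [rho_pos rho_sum] := rho_simplex tT.
have := convex_on_sum X_convex (fun j => ltW (rho_pos j)) (fun j => xi_in_X j tT).
by move/(_ (index_enum _)); rewrite rho_sum invr1 scale1r; apply; exact: ltr01.
Qed.

Lemma Q_ge0 t i k : (t < T)%N -> 0 <= Q i t 0 k.
Proof.
case: run => Q0 [_ [_ [Q_rec _]]]; elim: t => [|t IH] tT; first by rewrite Q0 mxE.
rewrite (Q_rec t.+2) // !mxE addr_ge0 ?IH 1?ltnW // mulr_ge0 ?le_max ?lexx ?orbT //.
by rewrite divr_ge0 ?sqrtr_ge0.
Qed.

Lemma expert_prox_step t i : (1 <= t < T)%N ->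
  dotv (sf t (x t)) (xi i t.+1 - y t) <= (alpha alpha0 c i t)^-1 *
    (enorm (y t - xi i t) ^+ 2 - enorm (y t - xi i t.+1) ^+ 2 - enorm (xi i t.+1 - xi i t) ^+ 2).
Proof.
move=> tT; have tT' : (1 <= t <= T)%N by case/andP: tT => -> /ltnW.
case: run => _ [_ [_ [_ [xi_min _]]]]; have [Xu umin] := xi_min t.+1 i tT.
set al := alpha alpha0 c i t; set be := beta alpha0 beta0 c i t.
have al_gt0 : 0 < al by rewrite divr_gt0 ?mulr_gt0 ?exprn_gt0 ?powR_gt0 ?ltr0n //; lia.
have be_ge0 : 0 <= be by rewrite divr_ge0 ?sqrtr_ge0.
have Q_ge0' k : 0 <= Q i t 0 k by apply: Q_ge0; case/andP: tT.
have cL : convex_fun_on X (fun z => al * dotv (sf t (x t)) z + al * be * dotv (Q i t) (pospart (g t z))).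
  apply: convex_fun_onD; apply: convex_fun_onZ.
  - exact: ltW.
  - exact: convex_fun_on_dotv.
  - exact: mulr_ge0 (ltW al_gt0) be_ge0.
  - by apply: convex_fun_on_dotv_pospart => // k; apply: g_convex.
have [Xy gy_le0] := y_feasible tT'.
have prox := prox_three_point X_convex cL Xu Xy umin.
have Qy : dotv (Q i t) (pospart (g t (y t))) = 0.
  by rewrite /dotv big1 // => k _; rewrite mxE max_r ?mulr0.
have Qu : 0 <= dotv (Q i t) (pospart (g t (xi i t.+1))).
  by apply: sumr_ge0 => k _; rewrite mxE mulr_ge0 // le_max lexx orbT.
rewrite /= Qy mulr0 addr0 in prox.
rewrite -(ler_pM2l al_gt0) mulrA mulfV ?gt_eqF // mul1r dotvBr.
by have := mulr_ge0 (mulr_ge0 (ltW al_gt0) be_ge0) Qu; lra.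
Qed.

Lemma ell_mean0 t : (1 <= t <= T)%N -> \sum_j rho j t * ell t j = 0.
Proof.
case: run => _ [_ [_ [_ [_ [_ x_def]]]]] tT; have [_ rho_sum] := rho_simplex tT.
under eq_bigr do rewrite dotvBr mulrBr -dotvZr.
by rewrite sumrB -mulr_suml rho_sum mul1r -dotv_sumr -x_def // subrr.
Qed.

Lemma ell_bound t j : (1 <= t <= T)%N -> `|ell t j| <= G * D.
Proof.
move=> tT; apply: le_trans (normr_dotv_le _ _) _.
apply: ler_pM; rewrite ?enorm_ge0 //; first exact: (sf_subgrad tT (x_in_X tT)).2.
exact: X_diam (xi_in_X j tT) (x_in_X tT).
Qed.

Lemma expert_regret_le (i : 'I_M) :
  \sum_(1 <= t < T.+1) dotv (sf t (x t)) (xi i t - y t) <=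
    T%:R `^ c / (alpha0 * 2 ^+ i) * (D ^+ 2 + 2 * D * path_length T y)
    + G ^+ 2 * alpha0 * 2 ^+ i / (4 * (1 - c)) * T%:R `^ (1 - c) + G * D.
Proof.
(* r 0 = 0, since 0 `^ c = 0 and x / 0 = 0. *)
set r := fun t => (alpha alpha0 c i t)^-1.
have a2 : 0 < alpha0 * 2 ^+ i by rewrite mulr_gt0 ?exprn_gt0.
have rE t : r t = t%:R `^ c / (alpha0 * 2 ^+ i) by rewrite /r /alpha invf_div.
have r_nd : nondecreasing_seq r.
  move=> s t st; rewrite !rE ler_pM2r ?invr_gt0 //.
  by apply: ge0_ler_powR; rewrite ?nnegrE ?ler_nat // ltW.
have r0 : 0 <= r 0%N by rewrite rE divr_ge0 ?powR_ge0 ?ltW.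
have r1 : 0 < r 1%N by rewrite rE divr_gt0 ?powR_gt0 ?ltr0n.
have inX t : (1 <= t <= T)%N -> [/\ X (xi i t), X (y t) & enorm (sf t (x t)) <= G].
  move=> tT; split; first exact: xi_in_X.
    exact: (y_feasible tT).1.
  exact: (sf_subgrad tT (x_in_X tT)).2.
have step t : (1 <= t < T)%N -> _ := expert_prox_step i (t := t).
move: (prox_dynamic_regret_le T_ge1 X_diam inX r0 r1 r_nd step) => /le_trans; apply.
have c'0 : 0 < 1 - c by rewrite subr_gt0.
have sum_le : \sum_(1 <= t < T) (r t)^-1 <= alpha0 * 2 ^+ i * (T%:R `^ (1 - c) / (1 - c)).
  rewrite (eq_bigr _ (fun t _ => invrK _)) -mulr_sumr ler_pM2l //.
  have := sum_powRN_le T.-1 (introT andP (conj c_gt0 c_lt1)); rewrite prednK // => /le_trans.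
  apply; rewrite ler_pM2r ?invr_gt0 //.
  by apply: ge0_ler_powR; rewrite ?nnegrE ?ler_nat ?leq_pred // subr_ge0 ltW.
have := ler_wpM2l (divr_ge0 (sqr_ge0 G) (ler0n R 4)) sum_le.
have -> : G ^+ 2 / 4 * (alpha0 * 2 ^+ i * (T%:R `^ (1 - c) / (1 - c)))
    = G ^+ 2 * alpha0 * 2 ^+ i / (4 * (1 - c)) * T%:R `^ (1 - c).
  by field; rewrite gt_eqF.
rewrite rE; lra.
Qed.

Lemma hedge_regret_le (i : 'I_M) :
  - \sum_(1 <= t < T) ell t i <=
    gamma0 * (G * D) ^+ 2 * expR (gamma0 * (G * D)) * T%:R `^ (1 - c)
    + 2 * i.+1%:R * ln 2 * T%:R `^ c / gamma0.
Proof.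
have Tc_ge1 : 1 <= T%:R `^ c by rewrite powR_ge1 ?ler1n // ltW.
have Tc_gt0 : 0 < T%:R `^ c := lt_le_trans ltr01 Tc_ge1.
have ga_gt0 : 0 < ga by rewrite divr_gt0.
have ga_le : ga <= gamma0 by rewrite ler_pdivrMr // ler_peMr // ltW.
set B := G * D; have B0 : 0 <= B by rewrite mulr_ge0.
have ell_bound' t j : (1 <= t < T)%N -> `|ell t j| <= B.
  by move=> /andP[t1 /ltnW tT]; apply: ell_bound; rewrite t1 tT.
have ell_mean0' t : (1 <= t < T)%N -> \sum_j rho j t * ell t j = 0.
  by move=> /andP[t1 /ltnW tT]; apply: ell_mean0; rewrite t1 tT.
have hedge := @hedge_loss_ge R M T rho (fun t j => ell t j) ga B ga_gt0 rho_simplex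
  ell_bound' ell_mean0' rho_update i T_ge1.
have init : - ln (rho i 1%N) <= (2 * i.+1)%:R * ln 2.
  by case: run => _ [_ [rho1 _]]; rewrite rho1 ln_init_weight_ge.
set S := \sum_(1 <= t < T) ell t i in hedge *.
have key : - S <= T.-1%:R * ga * (B ^+ 2 * expR (ga * B)) + (2 * i.+1)%:R * ln 2 / ga.
  rewrite -(ler_pM2l ga_gt0) mulrDr mulrN.
  have -> : ga * ((2 * i.+1)%:R * ln 2 / ga) = (2 * i.+1)%:R * ln 2 by field; rewrite gt_eqF.
  have -> : ga * (T.-1%:R * ga * (B ^+ 2 * expR (ga * B)))
      = T.-1%:R * ((ga * B) ^+ 2 * expR (ga * B)) by ring.
  lra.
apply: le_trans key _; apply: lerD.
  have Tga : T.-1%:R * ga <= gamma0 * T%:R `^ (1 - c).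
    rewrite powRB ?powRr1 ?ler0n //; last by apply/implyP => _; rewrite pnatr_eq0 -lt0n.
    by rewrite /gammaT mulrCA ler_pM2l // ler_pM2r ?invr_gt0 // ler_nat leq_pred.
  have expB : B ^+ 2 * expR (ga * B) <= B ^+ 2 * expR (gamma0 * B).
    by rewrite ler_wpM2l ?sqr_ge0 // ler_expR ler_wpM2r.
  have := ler_pM (mulr_ge0 (ler0n _ _) (ltW ga_gt0)) (mulr_ge0 (sqr_ge0 _) (expR_ge0 _)) Tga expB.
  by rewrite mulrA; lra.
by rewrite natrM /gammaT invf_div !mulrA.
Qed.

Lemma regret_le_expert_bound (i : 'I_M) :
  regret T f x y <= expert_bound c alpha0 gamma0 G D T%:R (path_length T y) i.
Proof.
have linearize : regret T f x y <= \sum_(1 <= t < T.+1) dotv (sf t (x t)) (x t - y t).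
  apply: ler_sum_nat => t tT; have [sg _] := sf_subgrad tT (x_in_X tT).
  by have := sg _ (y_feasible tT).1; rewrite -[y t - x t]opprB dotvNr; lra.
have mix : \sum_(1 <= t < T.+1) dotv (sf t (x t)) (x t - y t)
    = \sum_(1 <= t < T.+1) dotv (sf t (x t)) (xi i t - y t) - \sum_(1 <= t < T.+1) ell t i.
  rewrite -sumrB; apply: eq_bigr => t _; rewrite -dotvBr; congr dotv.
  by apply/rowP => k; rewrite !mxE; ring.
have last_loss : - ell T i <= G * D.
  have := ell_bound i (introT andP (conj T_ge1 (leqnn T))).
  by have := ler_norm (- ell T i); rewrite normrN; lra.
move: linearize; rewrite mix [X in _ - X]big_nat_recr //=.
have := expert_regret_le i; have := hedge_regret_le i.
rewrite /expert_bound; lra.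
Qed.

End VQBRun.

Unset Implicit Arguments.

Theorem theorem1 (R : realType) (c kappa alpha0 beta0 gamma0 G F D : R) :
  0 < c < 1 -> 0 <= kappa <= c -> 0 < alpha0 -> 0 < beta0 ->
  0 < gamma0 < 1 / Num.sqrt (2 * G) -> 0 < G -> 0 < F -> 0 <= D ->
  exists C : R, 0 < C /\
  forall (n m T : nat) (X : set 'rV[R]_n)
    (f : nat -> 'rV[R]_n -> R) (g : nat -> 'rV[R]_n -> 'rV[R]_m)
    (sf : nat -> 'rV[R]_n -> 'rV[R]_n)
    (xi : 'I_(nexperts kappa T) -> nat -> 'rV[R]_n)
    (Q : 'I_(nexperts kappa T) -> nat -> 'rV[R]_m)
    (rho : 'I_(nexperts kappa T) -> nat -> R)
    (x y : nat -> 'rV[R]_n),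
  (1 <= T)%N ->
  (* X convex, closed, with diameter at most D *)
  convex_on X -> closed X ->
  (forall u v, X u -> X v -> enorm (u - v) <= D) ->
  (* (A1) convexity *)
  (forall t, (1 <= t <= T)%N -> convex_fun_on X (f t)) ->
  (forall t k, (1 <= t <= T)%N -> convex_fun_on X (fun u => g t u 0 k)) ->
  (* (A2) boundedness *)
  (forall t u v, (1 <= t <= T)%N -> X u -> X v -> `|f t u - f t v| <= F) ->
  (forall t u, (1 <= t <= T)%N -> X u -> enorm (g t u) <= F) ->
  (* (A3) bounded subgradients; sf is the subgradient of f used by the algorithm *)
  (forall t u, (1 <= t <= T)%N -> X u -> is_subgrad X (f t) u (sf t u) /\ enorm (sf t u) <= G) ->
  (forall t u, (1 <= t <= T)%N -> X u -> exists S : 'M[R]_(m, n),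
      (forall k, is_subgrad X (fun v => g t v 0 k) u (row k S)) /\ frob S <= G) ->
  (* the algorithm VQB-OCO *)
  @VQB_run R n m c kappa alpha0 beta0 gamma0 T X f g sf xi Q rho x ->
  (* the comparator: global optimal decision sequence in hindsight *)
  offline_optimal T X f g y ->
  regret T f x y <=
    C * (T%:R `^ c * (1 + path_length T y) `^ (1 - kappa)
         + T%:R `^ (1 - c) * (1 + path_length T y) `^ kappa).
Proof.
move=> /andP[c0 c1] /andP[k0 kc] a0 b0 /andP[g0 _] G0 _ D0.
have k1 := le_lt_trans kc c1; have k01 : 0 <= kappa < 1 by rewrite k0 k1.
exists (rate_const c kappa alpha0 gamma0 G D); split; first exact: rate_const_gt0 (ltW G0) D0.
move=> n m T X f g sf xi Q rho x y T1 X_convex _ X_diam _ g_convex _ _ sf_subgrad _ run [y_feas _].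
have Xy t : (1 <= t <= T)%N -> X (y t) by move=> /y_feas[].
have P0 : 0 <= path_length T y by apply: sumr_ge0 => t _; apply: enorm_ge0.
have v1 : 1 <= (1 + path_length T y) `^ kappa by rewrite powR_ge1 // lerDl.
have D1 : 1 <= 1 + D by rewrite lerDl.
have [i iM bracket] := pow2_bracket v1 D1
  (path_scale_le (introT andP (conj k0 (ltW k1))) D0 X_diam Xy).
apply: le_trans (regret_le_expert_bound c0 c1 a0 (ltW b0) g0 (ltW G0) D0 T1 X_convex X_diam
  g_convex sf_subgrad run y_feas (Ordinal (iM : (i < nexperts kappa T)%N))) _.
by apply: expert_bound_le_rate; rewrite ?c0 ?ler1n // ltW.
Qed.
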